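(* Suppose $(A,W)$ is a Pratt comonoid such that $W$ has cardinality less than the continuum. Say that an element $a\in A$ dominates an equivalence class $E$ of strongly indecomposable elements of $W$ if every member of $W$ containing $a$ contains some member of $E$. Then every $a\in A$ dominates at least one equivalence class of strongly indecomposable elements of $W$. Moreover, if $(A,W)$ is $T_1$ and $a$ dominates an equivalence class $E$, then either $\bigcap_{w\in E}w=\emptyset$ or $\bigcap_{w\in E}w=\{a\}$; and in the latter case, $E$ is the set of all strongly indecomposable elements of $W$ containing $a$, $E$ is the only equivalence class dominated by $a$, and $a$ is the only element of $A$ dominating $E$. Consequently, if $(A,W)$ is $T_1$ and $A$ is infinite, there exists at least one equivalence class $E$ of strongly indecomposable elements of $W$ with $\bigcap_{w\in E}w=\emptyset$.
   Context: A Pratt comonoid is a pair $(A,W)$ where $A$ is a set and $W$ is a set of subsets of $A$ such that (i) $\emptyset\in W$ and $A\in W$; (ii) whenever $C\subseteq A\times A$ is such that for every $a\in A$ both the $a$-th row $\{b\mid (a,b)\in C\}$ and the $a$-th column $\{b\mid (b,a)\in C\}$ belong to $W$, the diagonal $\{b\mid (b,b)\in C\}$ also belongs to $W$. $(A,W)$ is $T_1$ if for all distinct $a,b\in A$ some member of $W$ contains $a$ but not $b$. $W$ is regarded as a meet-semilattice under intersection with least element $\emptyset$. Two elements are disjoint if their intersection is $\emptyset$. A nonempty $x\in W$ is strongly indecomposable if there do not exist two disjoint nonempty elements of $W$ properly contained in $x$. Two strongly indecomposable elements are equivalent if they are not disjoint (this is an equivalence relation on strongly indecomposable elements). *)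

From mathcomp Require Import all_boot.
From mathcomp Require Export boolp classical_sets functions cardinality.
Set Implicit Arguments. Unset Strict Implicit. Unset Printing Implicit Defensive.
Local Open Scope classical_set_scope.

Definition pratt_comonoid (A : Type) (W : set (set A)) : Prop :=
  W set0 /\ W setT /\
  forall C : set (A * A),
    (forall a : A, W [set b | C (a, b)] /\ W [set b | C (b, a)]) ->
    W [set b | C (b, b)].

Definition pratt_T1 (A : Type) (W : set (set A)) : Prop :=
  forall a b : A, a <> b -> exists w, W w /\ w a /\ ~ w b.

Definition strongly_indecomposable (A : Type) (W : set (set A)) (x : set A) :=
  W x /\ x !=set0 /\
  ~ (exists y z, W y /\ W z /\ y !=set0 /\ z !=set0 /\ y `&` z = set0 /\
                 y `<` x /\ z `<` x).

(* E is an equivalence class of strongly indecomposable elements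
   (equivalence = not disjoint). *)
Definition si_class (A : Type) (W : set (set A)) (E : set (set A)) :=
  exists x, strongly_indecomposable W x /\
    E = [set y | strongly_indecomposable W y /\ y `&` x !=set0].

Definition dominates (A : Type) (W : set (set A)) (a : A) (E : set (set A)) :=
  forall w, W w -> w a -> exists e, E e /\ e `<=` w.

Definition bigcap_fam (A : Type) (E : set (set A)) : set A :=
  [set b | forall w, E w -> w b].

Definition card_lt_continuum (A : Type) (W : set (set A)) : Prop :=
  ~ ([set: nat -> bool] #<= W)%card.

(** A Pratt comonoid is closed under binary intersections and under unions of
    pairwise disjoint sequences (take [C] to be a union of squares [x × x]).
    With fewer than continuum many members, [W] therefore contains no infinite
    sequence of pairwise disjoint nonempty members, so every process that keeps
    splitting off a nonempty member of [W] disjoint from the rest must stop.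
    Applied to the members containing [a], this yields a strongly
    indecomposable member whose class [a] dominates.  Under T1 the intersection
    of a class dominated by [a] is contained in [{a}], and the classes with
    intersection [{a}] for distinct points [a] would supply such a forbidden
    disjoint sequence when [A] is infinite. *)
From mathcomp Require Import all_boot boolp classical_sets cardinality.
Set Implicit Arguments. Unset Strict Implicit.
Local Open Scope classical_set_scope.

Definition si_equiv_class (A : Type) (W : set (set A)) (x : set A) :=
  [set y | strongly_indecomposable W y /\ y `&` x !=set0].

Lemma infinite_set_nat_inj (T : Type) :
  infinite_set [set: T] -> exists f : nat -> T, injective f.
Proof.
move=> /infiniteP /card_leP [f].
exists (fun n => val (f (exist _ n (in_setT n)))) => n m /val_inj /(@inj _ _ _ f).
by move=> /(_ (in_setT _) (in_setT _)) [].
Qed.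

Lemma bigcap_set1_mem (T : Type) (E : set (set T)) (a : T) (e : set T) :
  bigcap_fam E = [set a] -> E e -> e a.
Proof. by move=> capE Ee; suff /(_ e Ee) : bigcap_fam E a by []; rewrite capE. Qed.

Section PrattComonoid.
Variables (A : Type) (W : set (set A)).

Lemma si_equiv_class_self x : strongly_indecomposable W x -> si_equiv_class W x x.
Proof. by move=> sx; split=> //; have [_ [[c xc] _]] := sx; exists c. Qed.

Lemma si_class_inhabited E : si_class W E -> exists x, E x /\ strongly_indecomposable W x.
Proof. by move=> [x [sx ->]]; exists x; split; first exact: si_equiv_class_self. Qed.

Lemma si_class_mem_si E e : si_class W E -> E e -> strongly_indecomposable W e.
Proof. by move=> [x [_ ->]] []. Qed.

Lemma si_class_bigcap_set1 a E : si_class W E -> bigcap_fam E = [set a] ->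
  E = [set w | strongly_indecomposable W w /\ w a].
Proof.
move=> [x [sx defE]] capE; have memE := bigcap_set1_mem capE.
have xa : x a by apply: memE; rewrite defE; exact: si_equiv_class_self.
rewrite defE; apply/seteqP; split=> [y [sy yx] | y [sy ya]].
  by split=> //; apply: memE; rewrite defE.
by split=> //; exists a.
Qed.

Section T1.
Hypothesis HT : pratt_T1 W.

Lemma bigcap_dominated_sub a E : dominates W a E -> bigcap_fam E `<=` [set a].
Proof.
move=> domE b capEb; apply: contrapT => ba.
have [w [Ww [wa nwb]]] := HT (fun e => ba (esym e)).
by have [e [Ee ew]] := domE w Ww wa; apply: nwb; apply: ew; apply: capEb.
Qed.

Lemma dominated_bigcap_set1 a E : bigcap_fam E = [set a] ->
  forall a', dominates W a' E -> a' = a.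
Proof. by move=> capE a' /bigcap_dominated_sub; rewrite capE => /(_ a erefl) ->. Qed.

End T1.

Hypothesis HP : pratt_comonoid W.

Lemma W_setI x y : W x -> W y -> W (x `&` y).
Proof.
have [W0 [_ Wdiag]] := HP; move=> Wx Wy.
apply: (Wdiag [set p | x p.1 /\ y p.2]) => a; split.
- have [xa|nxa] := pselect (x a).
    by suff -> : [set b | x a /\ y b] = y by []; apply/seteqP; split=> b // [].
  by suff -> : [set b | x a /\ y b] = set0 by []; apply/seteqP; split=> b // [].
- have [ya|nya] := pselect (y a).
    by suff -> : [set b | x b /\ y a] = x by []; apply/seteqP; split=> b // [].
  by suff -> : [set b | x b /\ y a] = set0 by []; apply/seteqP; split=> b // [].
Qed.

Lemma W_bigcup_trivIset (x : nat -> set A) (S : set nat) :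
  (forall n, W (x n)) -> trivIset setT x -> W (\bigcup_(n in S) x n).
Proof.
have [W0 [_ Wdiag]] := HP; move=> Wx tx.
pose C := [set p : A * A | exists2 n, S n & x n p.1 /\ x n p.2].
have row a : W [set b | C (a, b)].
  have [[n Sn xna] | nxa] := pselect (exists2 n, S n & x n a).
    suff -> : [set b | C (a, b)] = x n by [].
    apply/seteqP; split=> [b [m Sm [xma xmb]] | b xnb]; last by exists n.
    by rewrite (tx n m) //; exists a.
  suff -> : [set b | C (a, b)] = set0 by [].
  by apply/seteqP; split=> // b [m Sm [xma _]]; apply: nxa; exists m.
have -> : \bigcup_(n in S) x n = [set b | C (b, b)].
  by apply/seteqP; split=> b [n Sn]; [exists n | case]; last exists n.
apply: Wdiag => a; split; first exact: row.
suff -> : [set b | C (b, a)] = [set b | C (a, b)] by exact: row.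
by apply/seteqP; split=> b [n Sn [? ?]]; exists n.
Qed.

(* Were [x] and [z] disjoint, [x `&` y] and [y `&` z] would split [y]. *)
Lemma si_meet_trans x y z : strongly_indecomposable W x ->
  strongly_indecomposable W y -> strongly_indecomposable W z ->
  x `&` y !=set0 -> y `&` z !=set0 -> x `&` z !=set0.
Proof.
move=> [Wx _] [Wy [_ ny]] [Wz _] [c [xc yc]] [d [yd zd]].
apply: contrapT => nxz; apply: ny.
exists (x `&` y), (y `&` z); do 2 (split; first exact: W_setI).
split; first by exists c.
split; first by exists d.
split; first by apply/seteqP; split=> [b [[xb _] [_ zb]] | b []]; apply: nxz; exists b.
split; split=> [b [] // | sub].
- by have [xd _] := sub d yd; apply: nxz; exists d.
- by have [_ zc] := sub c yc; apply: nxz; exists c.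
Qed.

Lemma si_equiv_class_eq x y : strongly_indecomposable W x ->
  strongly_indecomposable W y -> x `&` y !=set0 ->
  si_equiv_class W x = si_equiv_class W y.
Proof.
move=> sx sy xy; apply/seteqP; split=> z [sz zmeet]; split=> //.
- exact: si_meet_trans zmeet xy.
- by apply: si_meet_trans zmeet _; rewrite // setIC.
Qed.

Lemma si_class_eq E E' e e' : si_class W E -> si_class W E' ->
  E e -> E' e' -> e `&` e' !=set0 -> E = E'.
Proof.
move=> [x [sx ->]] [x' [sx' ->]] [se ex] [se' e'x'] ee'.
change (si_equiv_class W x = si_equiv_class W x').
rewrite -(si_equiv_class_eq se sx ex) -(si_equiv_class_eq se' sx' e'x').
exact: si_equiv_class_eq.
Qed.

Lemma dominated_class_unique a E E' : si_class W E -> bigcap_fam E = [set a] ->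
  si_class W E' -> dominates W a E' -> E' = E.
Proof.
move=> clE capE clE' domE'.
have [x [Ex [Wx _]]] := si_class_inhabited clE.
have [e' [E'e' e'x]] := domE' x Wx (bigcap_set1_mem capE Ex).
have [_ [[c e'c] _]] := si_class_mem_si clE' E'e'.
by apply: (si_class_eq clE' clE E'e' Ex); exists c; split=> //; apply: e'x.
Qed.

Hypothesis HC : card_lt_continuum W.

Lemma no_disjoint_sequence (x : nat -> set A) :
  (forall n, W (x n)) -> (forall n, x n !=set0) -> ~ trivIset setT x.
Proof.
move=> Wx x0 tx; apply: HC; apply/pcard_leP/injfunPex.
exists (fun S : nat -> bool => \bigcup_(n in [set n | S n]) x n).
  by move=> S _; exact: W_bigcup_trivIset.
move=> S S' _ _ eqS; apply/funext => n; have [b xnb] := x0 n.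
have memS (T : nat -> bool) : (\bigcup_(m in [set m | T m]) x m) b <-> T n.
  split=> [[m Tm xmb] | Tn]; last by exists n.
  by rewrite (tx n m) //; exists b.
by apply/idP/idP => /memS; [rewrite eqS | rewrite -eqS] => /memS.
Qed.

(* The split-off pieces [z] of an infinite run would be pairwise disjoint. *)
Lemma no_infinite_splitting (P : set A -> Prop) :
  (forall u, P u -> exists u' z, P u' /\ W z /\ z !=set0 /\ z `<=` u /\
                                 u' `<=` u /\ z `&` u' = set0) ->
  forall u, ~ P u.
Proof.
move=> split_off u0 Pu0.
have step u : exists p : set A * set A, P u ->
    P p.1 /\ W p.2 /\ p.2 !=set0 /\ p.2 `<=` u /\ p.1 `<=` u /\ p.2 `&` p.1 = set0.
  have [Pu | nPu] := pselect (P u); last by exists (set0, set0).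
  by have [u' [z H]] := split_off u Pu; exists (u', z).
have [g gP] := choice step.
pose u n := iter n (fun v => (g v).1) u0.
have Pu n : P (u n) by elim: n => //= n /gP [].
have u_desc k n : u (k + n) `<=` u n.
  elim: k => // k IH; apply: subset_trans IH.
  by have [_ [_ [_ [_ []]]]] := gP _ (Pu (k + n)).
apply: (@no_disjoint_sequence (fun n => (g (u n)).2)).
- by move=> n; have [_ []] := gP _ (Pu n).
- by move=> n; have [_ [_ []]] := gP _ (Pu n).
apply: ltn_trivIset => n m mn; have [_ [_ [_ [_ [_ gm]]]]] := gP _ (Pu m).
apply/seteqP; split=> // b [zmb znb]; rewrite -gm; split=> //.
have [_ [_ [_ [zn _]]]] := gP _ (Pu n).
have u_nm : u n `<=` u m.+1 by rewrite -(subnK mn); exact: u_desc.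
exact/u_nm/zn.
Qed.

Lemma si_exists v : W v -> v !=set0 ->
  exists2 e, strongly_indecomposable W e & e `<=` v.
Proof.
move=> Wv v0; apply: contrapT => nsi.
apply: (@no_infinite_splitting (fun u => [/\ W u, u !=set0 &
          ~ exists2 e, strongly_indecomposable W e & e `<=` u]) _ v).
  move=> u [Wu u0 nu].
  have /not_andP [//|/not_andP [//|/contrapT]] : ~ strongly_indecomposable W u.
    by move=> su; apply: nu; exists u.
  move=> [y [z [Wy [Wz [y0 [z0 [yz [yu zu]]]]]]]].
  exists y, z; split.
    split=> // -[e se ey]; apply: nu; exists e => //.
    exact: subset_trans ey (properW yu).
  by do 2 split=> //; split; [exact: properW | split; [exact: properW | rewrite setIC]].
by split.
Qed.

Lemma exists_dominated_class a : exists E, si_class W E /\ dominates W a E.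
Proof.
apply: contrapT => nE; have [_ [WT _]] := HP.
apply: (@no_infinite_splitting (fun u => W u /\ u a) _ setT); last by [].
move=> u [Wu ua]; have [e se eu] := si_exists Wu (ex_intro _ a ua).
have clE : si_class W (si_equiv_class W e) by exists e.
have [w [Ww [wa nw]]] : exists w, W w /\ w a /\
    ~ exists e', si_equiv_class W e e' /\ e' `<=` w.
  apply: contrapT => H; apply: nE; exists (si_equiv_class W e); split=> //.
  by move=> w Ww wa; apply: contrapT => nw; apply: H; exists w.
have [We [e0 _]] := se.
exists (u `&` w), e; split; first by split; [exact: W_setI |].
split=> //; split=> //; split=> //; split; first by move=> ? [].
(* A strongly indecomposable part of [e `&` w] would lie in [e]'s class and in [w]. *)
apply/seteqP; split=> // b [eb [_ wb]].
have [e' se' e'sub] := si_exists (W_setI We Ww) (ex_intro _ b (conj eb wb)).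
apply: nw; exists e'; split; last by move=> c /e'sub [].
split=> //; have [_ [[c e'c] _]] := se'.
by exists c; split=> //; case: (e'sub c e'c).
Qed.

Lemma exists_class_empty_bigcap : pratt_T1 W -> infinite_set [set: A] ->
  exists E, si_class W E /\ bigcap_fam E = set0.
Proof.
move=> HT /infinite_set_nat_inj [f f_inj]; apply: contrapT => nE.
have [E EP] := choice (fun n => exists_dominated_class (f n)).
have capE n : bigcap_fam (E n) = [set f n].
  have [clE domE] := EP n.
  have [cap0|//] := subset_set1 (bigcap_dominated_sub HT domE).
  by case: nE; exists (E n).
have [x xP] := choice (fun n => si_class_inhabited (proj1 (EP n))).
apply: (@no_disjoint_sequence x).
- by move=> n; have [_ [Wx _]] := xP n.
- by move=> n; have [_ [_ [x0 _]]] := xP n.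
move=> n m _ _ xnm; apply: f_inj.
have Enm : E n = E m.
  by apply: si_class_eq xnm; [exact: (EP n).1 | exact: (EP m).1 | exact: (xP n).1 | exact: (xP m).1].
have : bigcap_fam (E n) (f n) by rewrite capE.
by rewrite Enm capE.
Qed.

End PrattComonoid.

Theorem lemma8p4 (A : Type) (W : set (set A)) :
  pratt_comonoid W -> card_lt_continuum W ->
  (forall a : A, exists E, si_class W E /\ dominates W a E) /\
  (pratt_T1 W -> forall (a : A) (E : set (set A)),
     si_class W E -> dominates W a E ->
     (bigcap_fam E = set0 \/ bigcap_fam E = [set a]) /\
     (bigcap_fam E = [set a] ->
        E = [set w | strongly_indecomposable W w /\ w a] /\
        (forall E', si_class W E' -> dominates W a E' -> E' = E) /\
        (forall a', dominates W a' E -> a' = a))) /\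
  (pratt_T1 W -> infinite_set [set: A] ->
     exists E, si_class W E /\ bigcap_fam E = set0).
Proof.
move=> HP HC; split; first exact: exists_dominated_class.
split; last exact: exists_class_empty_bigcap.
move=> HT a E clE domE; split; first exact/subset_set1/(bigcap_dominated_sub HT).
move=> capE; split; first exact: si_class_bigcap_set1.
split; first by move=> E'; exact: dominated_class_unique.
exact: dominated_bigcap_set1.
Qed.
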